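(* Let $n\ge2$, $K\in\{1,\ldots,n-1\}$, $\gamma>0$, $\mathcal{C}=\{x\in\mathbb{R}^n\mid \mathbf{1}^\top x=1,\ x\ge0\}$, and let $f$ be real-valued and continuously differentiable on an open set $\mathcal{O}\supset\mathcal{C}$. Let $x^*$ be a d-stationary point of $$\min_{x\in\mathbb{R}^n}\ f(x)+\gamma T_{K,n,1}(x)+\delta_{\mathcal C}(x).$$ If $\gamma>\sqrt2 M'$, where $M'$ is a Lipschitz constant of $f$ on $\mathcal C$ with respect to the $\ell_2$ norm, then $T_{K,n,1}(x^* )=0$. If in addition $0\in\mathcal O$ and $f$ is $M$-smooth on $\mathcal O$, then $T_{K,n,1}(x^* )=0$ holds whenever $\gamma>\min\{\sqrt2M',\ \sqrt2(\|\nabla f(0)\|_2+M)\}$.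
   Context: $T_{K,n,1}(x)$ is the sum of the $n-K$ smallest values among $|x_1|,\ldots,|x_n|$; $\mathbf 1$ is the all-ones vector; $\delta_{\mathcal C}$ is the indicator of $\mathcal C$. $f$ is $M$-smooth on $\mathcal O$ if $\|\nabla f(x)-\nabla f(y)\|_2\le M\|x-y\|_2$ for $x,y\in\mathcal O$. $x^*\in\mathcal C$ is d-stationary if the directional derivative of the objective at $x^*$ is $\ge0$ for every $d$ in the feasible cone $\mathcal{F}(x^*;\mathcal{C})=\{d\mid \exists\varsigma'>0:\ x^*+\varsigma d\in\mathcal{C}\ \forall\varsigma\in(0,\varsigma')\}$. *)

From HB Require Import structures.
From mathcomp Require Import all_boot all_order all_algebra.
From mathcomp Require Import all_classical all_reals all_analysis.
Set Implicit Arguments. Unset Strict Implicit. Unset Printing Implicit Defensive.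
Import Order.TTheory GRing.Theory Num.Theory.
Import numFieldNormedType.Exports.
Local Open Scope classical_set_scope.
Local Open Scope ring_scope.

Section Defs.
Variables (R : realType) (n : nat).

Definition norm2 (v : 'rV[R]_n) : R := Num.sqrt (\sum_(i < n) v ord0 i ^+ 2).

Definition ones : 'rV[R]_n := const_mx 1.
Definition sum_coords (x : 'rV[R]_n) : R := \sum_(i < n) x ord0 i.

Definition simplex : set 'rV[R]_n :=
  [set x | sum_coords x = 1 /\ forall i, 0 <= x ord0 i].

Definition T_K1 (K : nat) (x : 'rV[R]_n) : R :=
  \sum_(i < n - K) nth 0 (sort <=%O [seq `|x ord0 j| | j <- enum 'I_n]) i.

Definition grad (f : 'rV[R]_n -> R) (x : 'rV[R]_n) : 'rV[R]_n :=
  \row_(i < n) ('d f x (delta_mx ord0 i : 'rV[R]_n) : R).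

Definition C1_on (f : 'rV[R]_n -> R) (O : set 'rV[R]_n) : Prop :=
  (forall x, O x -> differentiable f x) /\
  (forall x, O x -> {for x, continuous (grad f)}).

Definition lipschitz2_on (L : R) (f : 'rV[R]_n -> R) (A : set 'rV[R]_n) : Prop :=
  forall x y, A x -> A y -> `|f x - f y| <= L * norm2 (x - y).

Definition smooth_on (M : R) (f : 'rV[R]_n -> R) (O : set 'rV[R]_n) : Prop :=
  forall x y, O x -> O y -> norm2 (grad f x - grad f y) <= M * norm2 (x - y).

Definition feas_cone (A : set 'rV[R]_n) (x : 'rV[R]_n) : set 'rV[R]_n :=
  [set d | exists2 s' : R, 0 < s' &
           forall s : R, 0 < s -> s < s' -> A (x + s *: d)].

(* Along a feasible
   direction, delta_C vanishes at xs + t d for all small t>0, so the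
   difference quotient of the full objective coincides (for small t) with
   that of f + gamma T_{K,n,1}. *)
Definition d_stationary (f : 'rV[R]_n -> R) (gamma : R) (K : nat)
    (C : set 'rV[R]_n) (xs : 'rV[R]_n) : Prop :=
  C xs /\
  forall d, feas_cone C xs d ->
    exists2 L : R,
      (fun t : R => ((f (xs + t *: d) + gamma * T_K1 K (xs + t *: d))
                     - (f xs + gamma * T_K1 K xs)) / t) @ 0^'+ --> L
      & 0 <= L.

End Defs.

(** If T_{K,n,1}(x) > 0 at a point x of the simplex, some coordinate x_i among
    the n-K smallest is positive and some index j lies outside them.  Moving a
    mass t <= x_i from i to j stays in the simplex and lowers T_{K,n,1} by at
    least t, because the sum of the n-K smallest entries is at most the sum
    over the old index set.  Hence along d = e_j - e_i the difference quotient
    of the objective is at most that of f minus gamma.  As |d|_2 = sqrt 2, the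
    quotient of f is at most sqrt 2 M' by Lipschitz continuity; in the smooth
    case it tends to grad_j f(x) - grad_i f(x) <= sqrt 2 |grad f(x)|_2
    <= sqrt 2 (|grad f(0)|_2 + M), using |x|_2 <= 1 on the simplex.  Either
    bound below gamma contradicts d-stationarity. *)
From HB Require Import structures.
From mathcomp Require Import all_boot all_order all_algebra.
From mathcomp Require Import all_classical all_reals all_analysis.
From mathcomp Require Import ring lra.
Import Order.TTheory GRing.Theory Num.Theory.
Import numFieldNormedType.Exports.
Local Open Scope classical_set_scope.
Local Open Scope ring_scope.

Section SortedSums.
Context {R : realDomainType}.

Lemma sorted_prefix_sum_le (a : seq R) (m : nat) (P : seq nat) :
  sorted <=%O a -> uniq P -> all (fun p => p < size a)%N P -> size P = m ->
  \sum_(k < m) nth 0 a k <= \sum_(p <- P) nth 0 a p.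
Proof.
move=> sa; elim: m P => [|m IH] P uP aP sP.
  by rewrite (size0nil sP) big_ord0 big_nil.
have [p pP mp] : exists2 p, p \in P & (m <= p)%N.
  apply/hasP; apply/negPn/negP => /hasPn ltPm.
  have : (size P <= size (iota 0 m))%N.
    apply: uniq_leq_size => // x xP; rewrite mem_iota /= add0n.
    by have := ltPm x xP; rewrite -ltnNge.
  by rewrite size_iota sP ltnn.
rewrite big_ord_recr /= (perm_big _ (perm_to_rem pP)) big_cons addrC lerD //.
  have pa : (p < size a)%N by apply: (allP aP).
  apply: (le_sorted_leq_nth 0 sa) => //; rewrite inE //.
  exact: leq_ltn_trans pa.
apply: IH; first by rewrite rem_uniq.
  by apply/allP => x /mem_rem xP; apply: (allP aP).
by rewrite size_rem // sP.
Qed.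

Context {n : nat}.
Implicit Type G : 'I_n -> R.

Notation sorted_values G := (sort <=%O [seq G j | j <- enum 'I_n]).

Lemma sort_prefix_sum_le G (m : nat) (J : seq 'I_n) :
  uniq J -> size J = m ->
  \sum_(k < m) nth 0 (sorted_values G) k <= \sum_(l <- J) G l.
Proof.
move=> uJ sJ.
have := sort_sorted (@le_total _ R) [seq G j | j <- enum 'I_n].
rewrite sort_map; set Is := sort _ _ => sorted_Is.
have inI l : l \in Is by rewrite (perm_mem (permEl (perm_sort _ _))) mem_enum.
have -> : \sum_(l <- J) G l = \sum_(p <- map (index^~ Is) J) nth 0 [seq G i | i <- Is] p.
  rewrite big_map; apply: eq_big_seq => l _.
  by rewrite (nth_map l) ?index_mem ?inI // nth_index.
apply: sorted_prefix_sum_le => //.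
- by rewrite map_inj_in_uniq // => x y _ _; exact: index_inj (inI x) (inI y).
- by apply/allP => p /mapP [l _ ->]; rewrite size_map index_mem.
- by rewrite size_map.
Qed.

Lemma sort_prefix_sum_eq G (m : nat) : (m < n)%N ->
  exists J : seq 'I_n, exists j : 'I_n, [/\ uniq J, size J = m, j \notin J &
  \sum_(k < m) nth 0 (sorted_values G) k = \sum_(l <- J) G l].
Proof.
move=> mn; pose x0 : 'I_n := Ordinal mn.
rewrite sort_map; set Is := sort _ _.
have pI : perm_eq Is (enum 'I_n) by rewrite perm_sort.
have sI : size Is = n by rewrite (perm_size pI) size_enum_ord.
have : uniq (take m Is ++ drop m Is).
  by rewrite cat_take_drop (perm_uniq pI) enum_uniq.
rewrite cat_uniq => /and3P [uJ /hasPn disjoint_Is _].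
have j_drop : nth x0 (drop m Is) 0 \in drop m Is.
  by apply: mem_nth; rewrite size_drop sI subn_gt0.
exists (take m Is), (nth x0 (drop m Is) 0); split => //.
- by rewrite size_takel // sI ltnW.
- by apply/negP => jJ; move: (disjoint_Is _ j_drop); rewrite jJ.
rewrite (big_nth x0) size_takel ?sI ?(ltnW mn) // big_mkord.
apply: eq_bigr => k _.
by rewrite (nth_map x0) ?sI ?(ltn_trans (ltn_ord k)) // nth_take.
Qed.

End SortedSums.

Section Transfer.
Context {R : realType} {n : nat}.
Implicit Types (x v : 'rV[R]_n) (i j : 'I_n) (t : R).

Definition transfer i j : 'rV[R]_n := delta_mx ord0 j - delta_mx ord0 i.

Lemma simplex_transfer {x i j t} : simplex x -> i != j ->
  0 <= t -> t <= x ord0 i -> simplex (x + t *: transfer i j).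
Proof.
move=> [sum1 x_ge0] ij t0 ti; split.
  have sum_delta a : \sum_(k < n) (k == a)%:R = 1 :> R.
    by rewrite (bigD1 a) //= eqxx big1 ?addr0 // => k /negbTE ->.
  rewrite /sum_coords; under eq_bigr => k _ do rewrite !mxE eqxx /=.
  by rewrite big_split /= -mulr_sumr sumrB !sum_delta subrr mulr0 addr0.
move=> k; rewrite !mxE eqxx /=; have [->|ki] := eqVneq k i.
  by rewrite (negbTE ij) sub0r mulrN1 subr_ge0.
by rewrite subr0 addr_ge0 // mulr_ge0.
Qed.

Lemma T_K1_transfer_le {K x} : simplex x -> (1 <= K)%N -> (2 <= n)%N ->
  T_K1 K x != 0 ->
  exists i j, [/\ i != j, 0 < x ord0 i & forall t, 0 < t -> t <= x ord0 i ->
    T_K1 K (x + t *: transfer i j) <= T_K1 K x - t].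
Proof.
move=> [_ x_ge0] K1 n2 T0.
have mn : (n - K < n)%N by rewrite ltn_subrL K1 (leq_trans _ n2).
have [J [j [uJ sJ jJ sumJ]]] := sort_prefix_sum_eq (fun l => `|x ord0 l|) _ mn.
have TJ : T_K1 K x = \sum_(l <- J) `|x ord0 l| by rewrite /T_K1 sumJ.
have [i iJ xi] : exists2 i, i \in J & x ord0 i != 0.
  apply/hasP; apply: contraNT T0 => /hasPn J0; rewrite TJ big1_seq //.
  by move=> l /= lJ; have := J0 l lJ; rewrite negbK => /eqP ->; rewrite normr0.
have xi_gt0 : 0 < x ord0 i by rewrite lt0r xi x_ge0.
have ij : i != j by apply: contraNneq jJ => <-.
exists i, j; split => // t t0 ti.
apply: le_trans (sort_prefix_sum_le (fun l => `|(x + t *: transfer i j) ord0 l|) _ _ uJ sJ) _.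
rewrite TJ (bigD1_seq i) //= (bigD1_seq i iJ uJ) /= !mxE (negbTE ij) !eqxx /=.
rewrite sub0r mulrN1 (ger0_norm (x_ge0 i)) ger0_norm ?subr_ge0 //.
rewrite [in leRHS]addrAC lerD2l le_eqVlt; apply/orP; left; apply/eqP.
rewrite big_seq_cond [in RHS]big_seq_cond; apply: eq_bigr => l /andP [lJ li].
have lj : l != j by apply: contraNneq jJ => <-.
by rewrite !mxE (negbTE li) (negbTE lj) subrr mulr0 addr0.
Qed.

Lemma norm2_scale_transfer {i j t} : i != j -> 0 <= t ->
  norm2 (t *: transfer i j) = t * Num.sqrt 2.
Proof.
move=> ij t0; rewrite /norm2 (bigD1 i) //= (bigD1 j) 1?eq_sym //= big1; last first.
  by move=> k /andP [ki kj]; rewrite !mxE (negbTE ki) (negbTE kj) subrr mulr0 expr0n.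
rewrite !mxE !eqxx (negbTE ij) eq_sym (negbTE ij) /= addr0 sub0r subr0.
have -> : (t * - 1) ^+ 2 + (t * 1) ^+ 2 = t ^+ 2 * 2 by ring.
by rewrite sqrtrM ?sqr_ge0 // sqrtr_sqr ger0_norm.
Qed.

Lemma coord_sub_le_norm2 v {i j} : i != j ->
  v ord0 j - v ord0 i <= Num.sqrt 2 * norm2 v.
Proof.
move=> ij; apply: le_trans (ler_norm _) _.
have sum_ge0 : 0 <= \sum_(k < n) v ord0 k ^+ 2 by apply: sumr_ge0 => k _; rewrite sqr_ge0.
rewrite -sqrtr_sqr /norm2 -sqrtrM // ler_sqrt ?mulr_ge0 //.
have : v ord0 i ^+ 2 + v ord0 j ^+ 2 <= \sum_(k < n) v ord0 k ^+ 2.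
  rewrite (bigD1 i) //= (bigD1 j) 1?eq_sym //= addrA lerDl.
  by apply: sumr_ge0 => k _; rewrite sqr_ge0.
have := sqr_ge0 (v ord0 i + v ord0 j); nra.
Qed.

Lemma simplex_norm2 {x i} : simplex x -> 0 < x ord0 i -> 0 < norm2 x <= 1.
Proof.
move=> [sum1 x_ge0] xi; rewrite /norm2 sqrtr_gt0 -sqrtr1 ler_sqrt //.
apply/andP; split.
  rewrite (bigD1 i) //=; apply: lt_le_trans (exprn_gt0 2 xi) _.
  by rewrite lerDl; apply: sumr_ge0 => k _; rewrite sqr_ge0.
rewrite -sum1 /sum_coords; apply: ler_sum => k _.
have xk1 : x ord0 k <= 1 by rewrite -sum1 /sum_coords (bigD1 k) //= lerDl sumr_ge0.
by rewrite expr2 ler_piMr.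
Qed.

Lemma lipschitz_transfer_quotient_le {M' : R} {f : 'rV[R]_n -> R} {x i j} :
  lipschitz2_on M' f (@simplex R n) -> simplex x -> i != j -> 0 < x ord0 i ->
  \forall t \near 0^'+, (f (x + t *: transfer i j) - f x) / t <= Num.sqrt 2 * M'.
Proof.
move=> lip Cx ij xi; near=> t.
have t0 : 0 < t by near: t; exact: nbhs_right_gt.
have ti : t < x ord0 i by near: t; exact: nbhs_right_lt.
have := lip _ _ (simplex_transfer Cx ij (ltW t0) (ltW ti)) Cx.
rewrite addrAC subrr add0r (norm2_scale_transfer ij (ltW t0)) => f_lip.
rewrite ler_pdivrMr //; apply: le_trans (ler_norm _) (le_trans f_lip _).
by rewrite mulrA mulrAC [M' * _]mulrC.
Unshelve. all: by end_near.
Qed.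

Lemma diff_transfer (f : 'rV[R]_n -> R) x i j :
  'd f x (transfer i j) = grad f x ord0 j - grad f x ord0 i.
Proof. by rewrite linearB /= /grad !mxE. Qed.

Lemma smooth_grad_transfer_le {f : 'rV[R]_n -> R} {O : set 'rV[R]_n} {M x i j} :
  smooth_on M f O -> O 0 -> O x -> simplex x -> 0 < x ord0 i -> i != j ->
  grad f x ord0 j - grad f x ord0 i <= Num.sqrt 2 * (norm2 (grad f 0) + M).
Proof.
have split_le (a b c e u v : R) : c - e <= u -> (a - c) - (b - e) <= v -> a - b <= u + v.
  by move=> *; lra.
move=> smooth O0 Ox Cx xi ij.
have /andP [nx_gt0 nx_le1] := simplex_norm2 Cx xi.
have grad_lip := smooth _ _ Ox O0; rewrite subr0 in grad_lip.
have M0 : 0 <= M.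
  by rewrite -(pmulr_lge0 _ nx_gt0); apply: le_trans grad_lip; exact: sqrtr_ge0.
have grad_dist : norm2 (grad f x - grad f 0) <= M.
  by apply: le_trans grad_lip _; rewrite ler_piMr.
have subE k : (grad f x - grad f 0) ord0 k = grad f x ord0 k - grad f 0 ord0 k.
  by rewrite [LHS]mxE [X in _ + X]mxE.
have b0 := coord_sub_le_norm2 (grad f 0) ij.
have b1 := coord_sub_le_norm2 (grad f x - grad f 0) ij; rewrite !subE in b1.
by rewrite mulrDr; apply: split_le b0 (le_trans b1 (ler_wpM2l (sqrtr_ge0 _) grad_dist)).
Qed.

End Transfer.

Lemma cvg_right_quotient_diff {R : realType} {V : normedModType R}
    {f : V -> R} {x : V} (d : V) : differentiable f x ->
  (fun t : R => (f (x + t *: d) - f x) / t) @ 0^'+ --> 'd f x d.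
Proof.
move=> dfx.
have : (fun h : R => h^-1 *: ((f \o shift x) (h *: d) - f x)) @ 0^' --> 'D_d f x :=
  diff_derivable dfx.
rewrite deriveE //.
have -> : (fun h : R => h^-1 *: ((f \o shift x) (h *: d) - f x)) =
          (fun t : R => (f (x + t *: d) - f x) / t).
  by apply/funext => t /=; rewrite [t *: d + _]addrC mulrC.
apply: cvg_trans; apply: cvg_app; apply: within_subset => t /= t0.
by rewrite gt_eqF.
Qed.

Lemma d_stationary_T_K1_eq0 (R : realType) (n K : nat) (gamma B : R)
    (f : 'rV[R]_n -> R) (xs : 'rV[R]_n) :
  (2 <= n)%N -> (1 <= K)%N -> 0 <= gamma -> B < gamma ->
  d_stationary f gamma K (@simplex R n) xs ->
  (forall i j, i != j -> 0 < xs ord0 i ->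
     \forall t \near 0^'+, (f (xs + t *: transfer i j) - f xs) / t <= B) ->
  T_K1 K xs = 0.
Proof.
move=> n2 K1 gamma0 Bgamma [Cxs stat] quotient_le; apply/eqP/contraT => T0.
have [i [j [ij xi descent]]] := T_K1_transfer_le Cxs K1 n2 T0.
have feasible : feas_cone (@simplex R n) xs (transfer i j).
  by exists (xs ord0 i) => // t t0 ti; apply: simplex_transfer; rewrite ?ltW.
have [L qL L0] := stat _ feasible.
suff : L <= B - gamma by lra.
rewrite -(cvg_lim _ qL) //; apply: limr_le; first exact: cvgP qL.
near=> t.
have t0 : 0 < t by near: t; exact: nbhs_right_gt.
have ti : t < xs ord0 i by near: t; exact: nbhs_right_lt.
have fq : (f (xs + t *: transfer i j) - f xs) / t <= B by near: t; exact: quotient_le.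
have Tq := ler_wpM2l gamma0 (descent t t0 (ltW ti)).
move: fq Tq; rewrite !ler_pdivrMr // mulrBl mulrBr; lra.
Unshelve. all: by end_near.
Qed.

Theorem mainTheorem13 (R : realType) (n K : nat) (gamma : R)
    (f : 'rV[R]_n -> R) (O : set 'rV[R]_n) (xs : 'rV[R]_n) :
  (2 <= n)%N -> (1 <= K)%N -> (K <= n - 1)%N -> 0 < gamma ->
  open O -> @simplex R n `<=` O -> C1_on f O ->
  d_stationary f gamma K (@simplex R n) xs ->
  (forall M' : R, lipschitz2_on M' f (@simplex R n) ->
     gamma > Num.sqrt 2 * M' -> T_K1 K xs = 0) /\
  (O 0 -> forall M M' : R, smooth_on M f O -> lipschitz2_on M' f (@simplex R n) ->
     gamma > Num.min (Num.sqrt 2 * M') (Num.sqrt 2 * (norm2 (grad f 0) + M)) ->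
     T_K1 K xs = 0).
Proof.
move=> n2 K1 _ gamma_gt0 _ sub_O [diff_f _] stat.
have Cxs : simplex xs by case: stat.
have lipschitz_case M' : lipschitz2_on M' f (@simplex R n) ->
    gamma > Num.sqrt 2 * M' -> T_K1 K xs = 0.
  move=> lip gammaM; apply: d_stationary_T_K1_eq0 n2 K1 (ltW gamma_gt0) gammaM stat _.
  by move=> i j ij xi; exact: lipschitz_transfer_quotient_le lip Cxs ij xi.
split=> // O0 M M' smooth lip; rewrite gt_min => /orP [|gammaM].
  exact: lipschitz_case lip.
pose B := (Num.sqrt 2 * (norm2 (grad f 0) + M) + gamma) / 2.
apply: (@d_stationary_T_K1_eq0 _ _ _ _ B) n2 K1 (ltW gamma_gt0) _ stat _.
  by rewrite /B; lra.
move=> i j ij xi; have Oxs := sub_O _ Cxs.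
have dB : 'd f xs (transfer i j) < B.
  rewrite diff_transfer /B; have := smooth_grad_transfer_le smooth O0 Oxs Cxs xi ij.
  lra.
near=> t; apply/ltW; near: t.
exact: cvgr_lt _ (cvg_right_quotient_diff (transfer i j) (diff_f _ Oxs)) _ dB.
Unshelve. all: by end_near.
Qed.
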